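(* Let $U$ be a nonnegative, progressively measurable, right-continuous process and fix $t\ge0$. Let $A_t=\{\mathbb E[\int_t^\infty U_s^\theta ds\mid\mathcal F_t]>0\}$ and $$B_t=\bigcup_{T\in\mathbb Q,\,T\ge t}\ \bigcup_{\epsilon\in\mathbb Q,\,\epsilon>0}\big\{\mathbb E[\mathbf 1_{\{U_T\ge\epsilon\}}\mid\mathcal F_t]>0\big\}.$$ Then $\mathbb P(A_t\setminus B_t)=0$.
   Context: Work on a filtered probability space $(\Omega,\mathcal F,(\mathcal F_t)_{t\ge0},\mathbb P)$ with complete continuous filtration and trivial $\mathcal F_0$; $\theta>1$ is a fixed constant. *)

From HB Require Import structures.
From mathcomp Require Import all_boot all_order all_algebra.
From mathcomp Require Import all_classical all_reals all_analysis.
From mathcomp Require Import measurable_realfun.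
Set Implicit Arguments. Unset Strict Implicit. Unset Printing Implicit Defensive.
Import Order.TTheory GRing.Theory Num.Theory.
Import numFieldNormedType.Exports.
Local Open Scope classical_set_scope.
Local Open Scope ring_scope.

Section Defs.
Context {d : measure_display} {Omega : measurableType d} {R : realType}.

Definition filtration (F : R -> set (set Omega)) : Prop :=
  (forall t, 0 <= t -> sigma_algebra setT (F t)) /\
  (forall t, 0 <= t -> F t `<=` measurable) /\
  (forall s t, 0 <= s -> s <= t -> F s `<=` F t).

Definition complete_filtration (P : probability Omega R)
    (F : R -> set (set Omega)) : Prop :=
  forall N, measurable N -> P N = 0%E -> F 0 N.

Definition right_continuous_filtration (F : R -> set (set Omega)) : Prop :=
  forall t, 0 <= t -> F t = [set A | forall s, t < s -> F s A].

Definition trivial_F0 (P : probability Omega R) (F : R -> set (set Omega))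
  : Prop := forall A, F 0 A -> P A = 0%E \/ P A = 1%E.

Definition measurable_wrt (G : set (set Omega)) (f : Omega -> \bar R) : Prop :=
  forall B : set (\bar R), @measurable _ (\bar R) B -> G (f @^-1` B).

Definition cond_exp_version (P : probability Omega R) (G : set (set Omega))
    (X Y : Omega -> \bar R) : Prop :=
  (forall w, (0 <= Y w)%E) /\ measurable_wrt G Y /\
  (forall A, G A -> (\int[P]_(w in A) Y w = \int[P]_(w in A) X w)%E).

Definition progressive (F : R -> set (set Omega)) (U : R -> Omega -> R) : Prop :=
  forall t, 0 <= t -> forall B : set R, measurable B ->
    <<s `[0, t] `*` [set: Omega],
        [set C `*` D | C in [set C : set R | measurable C /\ C `<=` `[0, t]]
                     & D in F t] >>
      ([set p | p.1 \in `[0, t] /\ U p.1 p.2 \in B]).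

Definition right_continuous_paths (U : R -> Omega -> R) : Prop :=
  forall w s, 0 <= s -> (fun r => U r w) @ at_right s --> U s w.

End Defs.

(* Off B_t every Z_{T,eps} vanishes and B_t is F_t-measurable, so
   P(~B_t /\ {U_T >= eps}) = \int_{~B_t} Z_{T,eps} dP = 0.  Taking the countably
   many rational T >= t and eps > 0 together, almost surely on ~B_t the path U
   vanishes at every rational time after t, hence by right-continuity on all
   of [t, +oo).  Thus \int_{~B_t} \int_t^oo U_s^theta ds dP = 0, so the
   nonnegative F_t-measurable Y vanishes almost surely on ~B_t, i.e.
   A_t \ B_t is null. *)

From HB Require Import structures.
From mathcomp Require Import all_boot all_order all_algebra.
From mathcomp Require Import all_classical all_reals all_analysis.
From mathcomp Require Import measurable_realfun.
Set Implicit Arguments. Unset Strict Implicit. Unset Printing Implicit Defensive.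
Import Order.TTheory GRing.Theory Num.Theory.
Import numFieldNormedType.Exports.
Local Open Scope classical_set_scope.
Local Open Scope ring_scope.
Import HBNNSimple.

Lemma ae_forall_countable d (T : sigmaRingType d) (R : realType)
    (mu : {measure set T -> \bar R}) (I : countType) (Q : I -> T -> Prop) :
  (forall i, \forall x \ae mu, Q i x) -> \forall x \ae mu, forall i, Q i x.
Proof.
move=> aeQ; have : \forall x \ae mu, forall n,
    if unpickle n is Some i then Q i x else True.
  by apply: ae_foralln => n; case: unpickle => [i|]; [exact: aeQ|exact: aeW].
by apply: filterS => x Qx i; have := Qx (pickle i); rewrite pickleK.
Qed.

(* No measurability of [f] is needed: every simple function below [f]
   vanishes almost everywhere on [D]. *)
Lemma ge0_ae_integral0_eq d (T : measurableType d) (R : realType)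
    (mu : {measure set T -> \bar R}) (D : set T) (f : T -> \bar R) :
  (forall x, (0 <= f x)%E) -> {ae mu, forall x, D x -> f x = 0%E} ->
  (\int[mu]_(x in D) f x = 0)%E.
Proof.
move=> f0 [N [mN N0 fN]]; apply/eqP; rewrite eq_le integral_ge0 ?andbT//.
rewrite ge0_integralE//; apply: ge_ereal_sup => _ [h /= hf <-].
rewrite -integralT_nnsfun -(integral0 mu setT).
apply: ae_ge0_le_integral => //.
- by move=> x _; rewrite lee_fin; exact: fun_ge0.
- exact/measurable_EFinP.
exists N; split => // x /= /not_implyP [_ hx]; apply: contrapT => Nx; apply: hx.
apply: le_trans (hf x) _; rewrite patchE; case: ifPn => // /set_mem Dx.
suff -> : f x = 0%E by [].
by apply: contrapT => fx0; apply/Nx/fN => /(_ Dx).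
Qed.

Section conditional_expectation.
Context d (Omega : measurableType d) (R : realType) (P : probability Omega R).
Variable G : set (set Omega).
Hypothesis G_measurable : G `<=` measurable.

Lemma measurable_wrt_fun (f : Omega -> \bar R) (D : set Omega) :
  measurable D -> measurable_wrt G f -> measurable_fun D f.
Proof.
by move=> mD mf _ B mB; apply: measurableI => //; exact/G_measurable/mf.
Qed.

Lemma cond_exp_indic_eq0 (E C : set Omega) (Z : Omega -> \bar R) :
  cond_exp_version P G (fun w => (\1_E w)%:E) Z -> measurable E -> G C ->
  (forall w, C w -> Z w = 0%E) -> P (C `&` E) = 0%E.
Proof.
move=> [_ [_ ZE]] mE GC Z0.
rewrite setIC -(integral_indic _ (G_measurable GC) mE) -ZE //.
exact: integral0_eq.
Qed.

Lemma cond_exp_ae_eq0 (X Y : Omega -> \bar R) (C : set Omega) :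
  cond_exp_version P G X Y -> G C -> (\int[P]_(w in C) X w = 0)%E ->
  {ae P, forall w, C w -> Y w = 0%E}.
Proof.
move=> [Y0 [mY YX]] GC X0; have mC := G_measurable GC.
apply/(ae_eq_integral_abs P mC (measurable_wrt_fun mC mY)).
by rewrite -X0 -YX //; apply: eq_integral => w _; rewrite gee0_abs.
Qed.

End conditional_expectation.

Section progressive.
Context d (Omega : measurableType d) (R : realType).

Lemma g_sigma_rectangle_section (G : set (set Omega)) (T x : R)
    (S : set (R * Omega)) :
  G `<=` measurable -> x \in `[0, T] ->
  <<s `[0, T] `*` [set: Omega],
      [set C `*` D | C in [set C : set R | measurable C /\ C `<=` `[0, T]]
                   & D in G] >> S ->
  measurable [set w | S (x, w)].
Proof.
move=> Gm xT; move: S; apply: smallest_sub; last first.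
  move=> _ [C _ [D GD <-]]; have [Cx|nCx] := pselect (C x).
    rewrite (_ : [set w | _] = D); first exact: Gm.
    by apply/seteqP; split=> w /=; [case|].
  by rewrite (_ : [set w | _] = set0) //; apply/seteqP; split=> w // [].
split.
- by rewrite (_ : [set w | _] = set0) //; apply/seteqP; split=> w.
- move=> A mA; rewrite (_ : [set w | _] = ~` [set w | A (x, w)]).
    exact: measurableC.
  by apply/seteqP; split=> w /=; [case|move=> nA; split].
- by move=> A mA; exact: bigcupT_measurable.
Qed.

Lemma progressive_preimage_measurable (F : R -> set (set Omega))
    (U : R -> Omega -> R) (s : R) (B : set R) :
  filtration F -> progressive F U -> 0 <= s -> measurable B ->
  measurable (U s @^-1` B).
Proof.
move=> [_ [Fm _]] prog s0 mB.
have ss : s \in `[0, s] by rewrite in_itv /= s0 lexx.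
have := g_sigma_rectangle_section (Fm s s0) ss (prog s s0 B mB).
congr measurable; apply/seteqP; split => w /=; first by case=> _ /set_mem.
by move=> Bw; split => //; exact: mem_set.
Qed.

End progressive.

Lemma ler0_rat_ub (R : realType) (x : R) :
  (forall eps : rat, 0 < eps -> x < ratr eps) -> x <= 0.
Proof.
move=> xlt; rewrite leNgt; apply/negP => x0.
have [q /[!in_itv] /andP[q0 qx]] := @rat_in_itvoo R 0 x x0.
by have := xlt q; rewrite -(ltr0q R) => /(_ q0); rewrite ltNge (ltW qx).
Qed.

Lemma right_continuous_rat_zeros (R : realType) (f : R -> R) (t : R) :
  (forall s, t <= s -> f @ at_right s --> f s) ->
  (forall q : rat, t <= ratr q -> f (ratr q) = 0) ->
  forall s, t <= s -> f s = 0.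
Proof.
move=> rcf fq0 s ts; apply: contrapT => /eqP fs0.
apply: ((not_near_at_rightP s _).2 _ (cvgr_neq0 _ (rcf s ts) fs0)) => e.
have [|q /[!in_itv] /andP[sq qe]] := @rat_in_itvoo R s (s + e%:num).
  by rewrite ltrDl.
exists (ratr q); first exact/andP.
by rewrite fq0 ?eqxx // (le_trans ts) // ltW.
Qed.

Definition cond_hit_event (R : realType) (Omega : Type) (t : R)
    (Z : rat -> rat -> Omega -> \bar R) : set Omega :=
  [set w | exists T eps : rat, [/\ t <= ratr T, 0 < eps & (0 < Z T eps w)%E]].

Section cond_hit_event.
Context d (Omega : measurableType d) (R : realType) (P : probability Omega R).
Variables (F : R -> set (set Omega)) (U : R -> Omega -> R) (t : R).
Variable Z : rat -> rat -> Omega -> \bar R.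
Hypothesis F_filtration : filtration F.
Hypothesis U_progressive : progressive F U.
Hypothesis t_ge0 : 0 <= t.
Hypothesis Z_cond_exp : forall T eps : rat, t <= ratr T -> 0 < eps ->
  cond_exp_version P (F t)
    (fun w => (\1_[set w' | ratr eps <= U (ratr T) w'] w)%:E) (Z T eps).

Local Notation B := (cond_hit_event t Z).

Lemma cond_hit_event_Ft : F t B.
Proof.
have [Ft_sigma _] := F_filtration.
have FtE := measurable_g_measurableTypeE (Ft_sigma t t_ge0).
rewrite -FtE.
have -> : B = \bigcup_(T : rat) \bigcup_(e : rat)
    [set w | [/\ t <= ratr T, 0 < e & (0 < Z T e w)%E]].
  apply/seteqP; split => w /=.
    by move=> [T [e ?]]; exists T => //; exists e.
  by move=> [T _ [e _ ?]]; exists T, e.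
apply: (@bigcupT_measurable_rat _ (g_sigma_algebraType (F t))) => T.
apply: (@bigcupT_measurable_rat _ (g_sigma_algebraType (F t))) => e.
have [[tT e0]|nTe] := pselect (t <= ratr T /\ 0 < e); last first.
  rewrite (_ : [set w | _] = set0); first exact: measurable0.
  by apply/seteqP; split => // w [tT e0 _]; apply: nTe.
rewrite (_ : [set w | _] = Z T e @^-1` `]0%E, +oo%E]); last first.
  apply/seteqP; split => w /=; rewrite in_itv /= leey andbT; first by case.
  by move=> Zw; split.
by rewrite FtE; apply: (Z_cond_exp tT e0).2.1; exact: emeasurable_itv.
Qed.

Lemma cond_hit_eventC_Ft : F t (~` B).
Proof.
have [Ft_sigma _] := F_filtration; have [_ FtD _] := Ft_sigma t t_ge0.
by rewrite -setTD; exact/FtD/cond_hit_event_Ft.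
Qed.

Lemma ae_lt_off_cond_hit_event (T eps : rat) : t <= ratr T -> 0 < eps ->
  {ae P, forall w, ~ B w -> U (ratr T) w < ratr eps}.
Proof.
move=> tT eps0; have [_ [F_measurable _]] := F_filtration.
have mE : measurable [set w | ratr eps <= U (ratr T) w].
  rewrite (_ : [set w | _] = U (ratr T) @^-1` `[ratr eps, +oo[); last first.
    by apply/seteqP; split => w /=; rewrite in_itv /= andbT.
  apply: progressive_preimage_measurable F_filtration U_progressive _ _.
    exact: le_trans t_ge0 tT.
  exact: measurable_itv.
have E0 : P (~` B `&` [set w | ratr eps <= U (ratr T) w]) = 0%E.
  apply: (cond_exp_indic_eq0 (F_measurable t t_ge0) (Z_cond_exp tT eps0) mE
    cond_hit_eventC_Ft).
  move=> w Bw; apply/eqP; rewrite eq_le (Z_cond_exp tT eps0).1 andbT leNgt.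
  by apply/negP => Zw; apply: Bw; exists T, eps.
exists (~` B `&` [set w | ratr eps <= U (ratr T) w]); split => //.
  exact/measurableI/mE/F_measurable/cond_hit_eventC_Ft.
by move=> w /= /not_implyP[Bw /negP]; rewrite -leNgt.
Qed.

Hypothesis U_ge0 : forall s w, 0 <= s -> 0 <= U s w.
Hypothesis U_right_continuous : right_continuous_paths U.

Lemma ae_paths_vanish_off_cond_hit_event :
  {ae P, forall w, ~ B w -> forall s, t <= s -> U s w = 0}.
Proof.
have small : \forall w \ae P, forall Te : rat * rat,
    t <= ratr Te.1 -> 0 < Te.2 -> ~ B w -> U (ratr Te.1) w < ratr Te.2.
  apply: ae_forall_countable => -[T e] /=.
  have [[tT e0]|nTe] := pselect (t <= ratr T /\ 0 < e).
    by apply: filterS (ae_lt_off_cond_hit_event tT e0) => w + _ _.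
  by apply: aeW => w tT e0; case: nTe.
apply: filterS small => w small Bw.
apply: (right_continuous_rat_zeros (f := U^~ w)) => [s ts|q tq].
  exact/U_right_continuous/(le_trans t_ge0 ts).
apply/eqP; rewrite eq_le U_ge0 ?andbT; last exact: le_trans t_ge0 tq.
by apply: ler0_rat_ub => e e0; exact: (small (q, e)).
Qed.

Variables (theta : R) (Y : Omega -> \bar R).
Hypothesis theta_neq0 : theta != 0.
Hypothesis Y_cond_exp : cond_exp_version P (F t)
  (fun w => (\int[@lebesgue_measure R]_(s in `[t, +oo[) (U s w `^ theta)%:E)%E) Y.

Lemma ae_cond_exp_eq0_off_cond_hit_event :
  {ae P, forall w, ~ B w -> Y w = 0%E}.
Proof.
have [_ [F_measurable _]] := F_filtration.
apply: (cond_exp_ae_eq0 (F_measurable t t_ge0) Y_cond_exp cond_hit_eventC_Ft).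
apply: ge0_ae_integral0_eq.
  by move=> w; apply: integral_ge0 => s _; rewrite lee_fin powR_ge0.
apply: filterS ae_paths_vanish_off_cond_hit_event => w U0 Bw.
apply: integral0_eq => s; rewrite /= in_itv /= andbT => ts.
by rewrite U0 // powR0.
Qed.

End cond_hit_event.

Theorem lemma8p3 (d : measure_display) (Omega : measurableType d)
  (R : realType) (P : probability Omega R) (F : R -> set (set Omega))
  (theta : R) (U : R -> Omega -> R) (t : R)
  (Y : Omega -> \bar R) (Z : rat -> rat -> Omega -> \bar R) :
  filtration F -> complete_filtration P F -> right_continuous_filtration F ->
  trivial_F0 P F -> 1 < theta ->
  (forall s w, 0 <= s -> 0 <= U s w) -> progressive F U ->
  right_continuous_paths U -> 0 <= t ->
  cond_exp_version P (F t)
    (fun w => (\int[@lebesgue_measure R]_(s in `[t, +oo[) (U s w `^ theta)%:E)%E) Y ->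
  (forall T eps : rat, t <= ratr T -> 0 < eps ->
    cond_exp_version P (F t)
      (fun w => (\1_[set w' | ratr eps <= U (ratr T) w'] w)%:E) (Z T eps)) ->
  let A := [set w | (0 < Y w)%E] in
  let B := [set w | exists T eps : rat,
                     [/\ t <= ratr T, 0 < eps & (0 < Z T eps w)%E]] in
  P (A `\` B) = 0%E.
Proof.
move=> F_filtration _ _ _ theta_gt1 U_ge0 U_prog U_rc t_ge0 Y_cond_exp
  Z_cond_exp A B.
have theta_neq0 : theta != 0 by rewrite gt_eqF // (lt_trans ltr01 theta_gt1).
have [N [mN PN0 YN]] := ae_cond_exp_eq0_off_cond_hit_event F_filtration U_prog
  t_ge0 Z_cond_exp U_ge0 U_rc theta_neq0 Y_cond_exp.
have [_ [F_measurable _]] := F_filtration.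
have mA : measurable A.
  rewrite (_ : A = Y @^-1` `]0%E, +oo%E]); last first.
    by apply/seteqP; split => w /=; rewrite in_itv /= leey andbT.
  exact/(F_measurable t t_ge0)/Y_cond_exp.2.1/emeasurable_itv.
have mB := F_measurable t t_ge0 _
  (cond_hit_event_Ft F_filtration t_ge0 Z_cond_exp).
apply: (subset_measure0 (measurableD mA mB) mN _ PN0) => w [Aw nBw].
by apply: YN => /(_ nBw) Yw0; move: Aw; rewrite /A /= Yw0 ltxx.
Qed.
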